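(* Let $B$ be a Borel ideal of $S=k[x_1,\dots,x_n]$, let $m\in\mathrm{Bgens}(B)$ with $x_p$ dividing $m$, let $d$ be the maximal index such that $x_p$ is in the $d$-th position of $m$, and set $\mu=\frac{\operatorname{trunc}_d(m)}{x_p}$. Then $\frac{m}{x_p}$ is a $p$-socle for $B$ if and only if $\mu$ is a $p$-socle for $\operatorname{trunc}_d(B)$.
   Context: Monomials are written in factored form $x_{i_1}\cdots x_{i_r}$ with $i_1\le\dots\le i_r$; $x_{i_j}$ is in the $j$-th position. $\operatorname{trunc}_d(m)=x_{i_1}\cdots x_{i_d}$ if $d\le r$, and $=m$ otherwise; $\operatorname{trunc}_d(I)$ is the ideal generated by the $d$-truncations of all monomials of $I$. A Borel ideal is a monomial ideal closed under Borel moves $m\mapsto m\frac{x_{i_1}}{x_{j_1}}\cdots\frac{x_{i_s}}{x_{j_s}}$ ($i_t<j_t$, all $x_{j_t}\mid m$); $\mathrm{Bgens}(B)$ is the unique minimal set $T$ of monomials such that $B$ is the smallest Borel ideal containing $T$. A monomial $\nu$ is a $p$-socle for a monomial ideal $I$ if $(I:\nu)=(x_1,\dots,x_p)$. *)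

(* Monomials of S = k[x_1,...,x_n] are exponent vectors
   {ffun 'I_n -> nat}; variable x_{i+1} corresponds to i : 'I_n (0-based).
   A monomial ideal is represented by its set of monomials (a predicate),
   which is upward closed under divisibility. *)
From mathcomp Require Import all_boot.
Set Implicit Arguments. Unset Strict Implicit. Unset Printing Implicit Defensive.

Definition mon (n : nat) := {ffun 'I_n -> nat}.

Section Mon.
Variable n : nat.

Definition mmul (a b : mon n) : mon n := [ffun i => a i + b i].
Definition mdvd (a b : mon n) : bool := [forall i, a i <= b i].
(* m / x_i (used only when x_i divides m) *)
Definition mdiv (m : mon n) (i : 'I_n) : mon n := [ffun j => m j - (j == i)].

(* factored form x_{i_1} ... x_{i_r}, i_1 <= ... <= i_r, as a sorted seq *)
Definition fact_seq (m : mon n) : seq 'I_n :=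
  flatten [seq nseq (m i) i | i <- enum 'I_n].
Definition mon_of_seq (s : seq 'I_n) : mon n := [ffun i => count_mem i s].

(* x_p is in the j-th position (1-based) of m *)
Definition in_pos (m : mon n) (p : 'I_n) (j : nat) : Prop :=
  0 < j <= size (fact_seq m) /\ nth p (fact_seq m) j.-1 = p.

Definition trunc (d : nat) (m : mon n) : mon n :=
  if d <= size (fact_seq m) then mon_of_seq (take d (fact_seq m)) else m.

Definition mideal (I : mon n -> Prop) : Prop :=
  forall a b, I a -> mdvd a b -> I b.

Definition trunc_ideal (d : nat) (I : mon n -> Prop) : mon n -> Prop :=
  fun u => exists t, (exists m, I m /\ t = trunc d m) /\ mdvd t u.

(* Borel move m * x_{i_1}/x_{j_1} ... x_{i_s}/x_{j_s}, list s of pairs (i_t,j_t),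
   with i_t < j_t, x_{j_t} | m, and the result a monomial. *)
Definition borel_move_ok (m : mon n) (s : seq ('I_n * 'I_n)) : Prop :=
  (forall t, t \in s -> (t.1 < t.2) && (0 < m t.2)) /\
  (forall k, count (fun t => t.2 == k) s <= m k + count (fun t => t.1 == k) s).
Definition borel_move (m : mon n) (s : seq ('I_n * 'I_n)) : mon n :=
  [ffun k => m k + count (fun t => t.1 == k) s - count (fun t => t.2 == k) s].

Definition borel (I : mon n -> Prop) : Prop :=
  mideal I /\ forall m s, I m -> borel_move_ok m s -> I (borel_move m s).

Definition borel_closure (T : mon n -> Prop) : mon n -> Prop :=
  fun u => forall J, borel J -> (forall t, T t -> J t) -> J u.

Definition bgenerates (B T : mon n -> Prop) : Prop :=
  forall u, borel_closure T u <-> B u.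

Definition minimal_bgen (B T : mon n -> Prop) : Prop :=
  bgenerates B T /\
  forall T', (forall x, T' x -> T x) -> bgenerates B T' -> forall x, T x -> T' x.

Definition in_Bgens (B : mon n -> Prop) (m : mon n) : Prop :=
  exists T, minimal_bgen B T /\
    (forall T', minimal_bgen B T' -> forall x, T' x <-> T x) /\ T m.

(* nu is a p-socle for I: (I : nu) = (x_1, ..., x_p)  (p 0-based here) *)
Definition psocle (I : mon n -> Prop) (p : 'I_n) (nu : mon n) : Prop :=
  forall u, I (mmul u nu) <-> exists i : 'I_n, (i <= p) && (0 < u i).

End Mon.

(* Because the factored form is sorted, the last position d of x_p in m is the
   number of factors of m of index at most p.  Hence trunc_d m is the
   (x_1,...,x_p)-part of m and mu is the low part of m/x_p.  The Borel moves
   m x_i/x_p (i <= p) lie in B and truncate to mu x_i, so (x_1,...,x_p) is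
   contained in both colon ideals, and each socle condition reduces to: no
   monomial in x_{p+1},...,x_n times m/x_p (resp. mu) lies in the ideal.
   Witnesses of failure transfer between the two sides because a monomial of
   low degree at least d truncates to low degree exactly d, while below d its
   truncation keeps the whole low part and the high part absorbs the rest. *)

From mathcomp Require Import all_boot.

Set Implicit Arguments. Unset Strict Implicit. Unset Printing Implicit Defensive.

Lemma pairwise_filter_cat (T : eqType) (r : rel T) (a : pred T) (s : seq T) :
  (forall x y, r x y -> a y -> a x) -> pairwise r s ->
  s = filter a s ++ filter (predC a) s.
Proof.
move=> a_down; elim: s => //= x s IHs /andP[rxs /IHs {1}->].
case ax: (a x) => //=.
have nas : all (predC a) s.
  by apply: sub_all rxs => y rxy; apply/negP => /(a_down _ _ rxy); rewrite ax.
have -> : filter a s = [::] by apply/eqP; rewrite -[_ == _]negbK -has_filter -all_predC.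
by rewrite (all_filterP nas).
Qed.

Lemma pairwise_flatten_nseq (T : eqType) (r : rel T) (f : T -> nat) (s : seq T) :
  reflexive r -> pairwise r s -> pairwise r (flatten [seq nseq (f x) x | x <- s]).
Proof.
move=> r_refl; elim: s => //= x s IHs /andP[rxs /IHs ps].
rewrite pairwise_cat ps andbT; apply/andP; split.
- by apply/allrelP => y z /nseqP[-> _] /flatten_mapP[t ts /nseqP[-> _]]; apply: (allP rxs).
- by elim: (f x) => //= k ->; rewrite andbT all_nseq r_refl orbT.
Qed.

Lemma sum_count_mem (T : finType) (a : pred T) (s : seq T) :
  \sum_(j | a j) count_mem j s = count a s.
Proof.
elim: s => [|x s IHs] /=; first by rewrite big1.
rewrite big_split /= IHs; congr (_ + _).
rewrite big_mkcond (bigD1 x) //= eqxx big1 ?addn0; first by case: (a x).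
by move=> j /negbTE; rewrite eq_sym => ->; case: (a j).
Qed.

Section Monomials.
Variable n : nat.
Implicit Types (a b c u v w : mon n) (i j k : 'I_n).

Definition mvar i : mon n := [ffun j => (j == i) : nat].

Lemma mdvdP a b : reflect (forall j, a j <= b j) (mdvd a b).
Proof. exact: forallP. Qed.

Lemma mdvd_refl w : mdvd w w.
Proof. by apply/mdvdP. Qed.

Lemma mdvd_trans a b c : mdvd a b -> mdvd b c -> mdvd a c.
Proof. by move=> /mdvdP ab /mdvdP bc; apply/mdvdP => j; apply: leq_trans (ab j) (bc j). Qed.

Lemma mdvd_mmul2r a b c : mdvd a b -> mdvd (mmul a c) (mmul b c).
Proof. by move=> /mdvdP ab; apply/mdvdP => j; rewrite !ffunE leq_add2r. Qed.

Lemma mdvd_mvar i u : 0 < u i -> mdvd (mvar i) u.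
Proof. by move=> ui; apply/mdvdP => j; rewrite ffunE; case: eqP => // ->. Qed.

Lemma mmul_mvar_mdiv w k : 0 < w k -> mmul (mvar k) (mdiv w k) = w.
Proof.
move=> wk; apply/ffunP => j; rewrite !ffunE.
by case: eqP => [->|_]; rewrite ?subn0 // add1n subn1 prednK.
Qed.

Lemma borel_move_exchange w i k : 0 < w k ->
  borel_move w [:: (i, k)] = mmul (mvar i) (mdiv w k).
Proof.
move=> wk; apply/ffunP => j; rewrite !ffunE /= !addn0 ![_ == j]eq_sym.
case jk: (j == k); last by rewrite !subn0 addnC.
by rewrite (eqP jk) addnBA // addnC.
Qed.

Lemma borel_mvar_mdiv (B : mon n -> Prop) w i k :
  borel B -> B w -> 0 < w k -> i <= k -> B (mmul (mvar i) (mdiv w k)).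
Proof.
move=> [_ B_move] Bw wk; rewrite leq_eqVlt => /orP[/eqP/val_inj -> | ik].
  by rewrite mmul_mvar_mdiv.
rewrite -borel_move_exchange //; apply: B_move Bw _; split.
  by move=> t; rewrite inE => /eqP -> /=; rewrite ik.
by move=> j /=; rewrite !addn0; case: eqP => [<-|_]; rewrite ?addn_gt0 ?wk.
Qed.

Lemma mideal_trunc_ideal (I : mon n -> Prop) d : mideal (trunc_ideal d I).
Proof. by move=> a b [t [It ta]] ab; exists t; split; last exact: mdvd_trans ab. Qed.

Lemma in_Bgens_mem (B : mon n -> Prop) w : in_Bgens B w -> B w.
Proof. by case=> T [[gen_B _] [_ Tw]]; apply/gen_B => J _; apply. Qed.

Lemma count_fact_seq (a : pred 'I_n) w : count a (fact_seq w) = \sum_(j | a j) w j.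
Proof.
rewrite /fact_seq count_flatten sumnE !big_map [RHS]big_mkcond /=.
by apply: eq_bigr => j _; rewrite count_nseq; case: (a j); rewrite ?mul1n ?mul0n.
Qed.

Lemma count_mem_fact_seq w j : count_mem j (fact_seq w) = w j.
Proof. by rewrite count_fact_seq big_pred1_eq. Qed.

Lemma pairwise_fact_seq w : pairwise (fun i j : 'I_n => i <= j) (fact_seq w).
Proof.
apply: pairwise_flatten_nseq => [i|]; first exact: leqnn.
rewrite -sorted_pairwise; last by move=> ? ? ?; apply: leq_trans.
by have := iota_sorted 0 n; rewrite -val_enum_ord sorted_map.
Qed.

Lemma trunc_count d w j :
  d <= size (fact_seq w) -> trunc d w j = count_mem j (take d (fact_seq w)).
Proof. by move=> d_s; rewrite /trunc d_s ffunE. Qed.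

Lemma mdvd_trunc d w : mdvd (trunc d w) w.
Proof.
apply/mdvdP => j; case: (leqP d (size (fact_seq w))) => [d_s | s_d].
  rewrite trunc_count // -(count_mem_fact_seq w j).
  by rewrite -{2}(cat_take_drop d (fact_seq w)) count_cat leq_addr.
by rewrite /trunc ifN // -ltnNge.
Qed.

End Monomials.

Section LowPart.
Variables (n : nat) (p : 'I_n).
Implicit Types (a b u v w : mon n) (i j : 'I_n).

Definition mlow w : mon n := [ffun j : 'I_n => if j <= p then w j else 0].
Definition mhigh w : mon n := [ffun j : 'I_n => if j <= p then 0 else w j].
Definition lowdeg w : nat := \sum_(j : 'I_n | j <= p) w j.

Lemma mlow_mmul a b : mlow (mmul a b) = mmul (mlow a) (mlow b).
Proof. by apply/ffunP => j; rewrite !ffunE; case: ifP. Qed.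

Lemma mlow_mvar i : i <= p -> mlow (mvar i) = mvar i.
Proof.
move=> ip; apply/ffunP => j; rewrite !ffunE.
by case: ifP => // /negbT; case: eqP => // ->; rewrite ip.
Qed.

Lemma mdiv_mlow w : mdiv (mlow w) p = mlow (mdiv w p).
Proof.
apply/ffunP => j; rewrite !ffunE.
by case: ifP => // /negbT; case: eqP => // ->; rewrite leqnn.
Qed.

Lemma mlow_mmul_mhigh u v : mlow (mmul (mhigh u) v) = mlow v.
Proof. by apply/ffunP => j; rewrite !ffunE; case: (j <= p). Qed.

Lemma mdvd_mlow a b : mdvd a b -> mdvd (mlow a) (mlow b).
Proof. by move=> /mdvdP ab; apply/mdvdP => j; rewrite !ffunE; case: ifP. Qed.

Lemma mlow_idem w : mlow (mlow w) = mlow w.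
Proof. by apply/ffunP => j; rewrite !ffunE; case: (j <= p). Qed.

Lemma mdvd_mmul_mhigh w v : mdvd (mlow w) (mlow v) -> mdvd w (mmul (mhigh w) v).
Proof.
move=> /mdvdP wv; apply/mdvdP => j; have := wv j; rewrite !ffunE.
by case: ifP => _; rewrite ?add0n // => _; apply: leq_addr.
Qed.

Lemma lowdeg_mlow w : lowdeg (mlow w) = lowdeg w.
Proof. by apply: eq_bigr => j jp; rewrite ffunE jp. Qed.

Lemma lowdeg_mdvd a b : mdvd a b -> lowdeg a <= lowdeg b.
Proof. by move=> /mdvdP ab; apply: leq_sum => j _; apply: ab. Qed.

Lemma lowdeg_mmul a b : lowdeg (mmul a b) = lowdeg a + lowdeg b.
Proof. by rewrite -big_split; apply: eq_bigr => j _; rewrite ffunE. Qed.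

Lemma lowdeg_mvar i : i <= p -> lowdeg (mvar i) = 1.
Proof.
move=> ip; rewrite /lowdeg (bigD1 i) //= ffunE eqxx big1 // => j /andP[_ ji].
by rewrite ffunE (negbTE ji).
Qed.

Lemma lowdeg_mdiv w : 0 < w p -> (lowdeg (mdiv w p)).+1 = lowdeg w.
Proof. by move=> wp; rewrite -add1n -(lowdeg_mvar (leqnn p)) -lowdeg_mmul mmul_mvar_mdiv. Qed.

Lemma mhighP u : (exists2 i : 'I_n, i <= p & 0 < u i) \/ mhigh u = u.
Proof.
case: (pickP (fun i : 'I_n => (i <= p) && (0 < u i))) => [i /andP[ip ui] | no_low].
  by left; exists i.
right; apply/ffunP => j; rewrite ffunE; case: ifP => // jp.
by have := no_low j; rewrite jp lt0n => /negbFE/eqP.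
Qed.

Lemma psocleP (I : mon n -> Prop) v : mideal I ->
  psocle I p v <->
  (forall i, i <= p -> I (mmul (mvar i) v)) /\ (forall u, ~ I (mmul (mhigh u) v)).
Proof.
move=> idealI; split=> [socle | [I_low no_high] u].
  split=> [i ip | u /socle [i /andP[ip]]]; last by rewrite ffunE ip.
  by apply/socle; exists i; rewrite ip ffunE eqxx.
split=> [Iu | [i /andP[ip ui]]].
  case: (mhighP u) => [[i ip ui] | high_u]; first by exists i; rewrite ip.
  by case: (no_high u); rewrite high_u.
by apply: idealI (I_low i ip) _; apply: mdvd_mmul2r; apply: mdvd_mvar.
Qed.

Local Notation lo := (fun j : 'I_n => j <= p).

Lemma fact_seq_low_high w :
  fact_seq w = filter lo (fact_seq w) ++ filter (predC lo) (fact_seq w).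
Proof. by apply: pairwise_filter_cat (pairwise_fact_seq w) => i j; apply: leq_trans. Qed.

Lemma size_low_fact_seq w : size (filter lo (fact_seq w)) = lowdeg w.
Proof. by rewrite size_filter count_fact_seq. Qed.

Lemma lowdeg_le_size w : lowdeg w <= size (fact_seq w).
Proof. by rewrite -size_low_fact_seq size_filter count_size. Qed.

Lemma lowdeg_mon_of_seq s : lowdeg (mon_of_seq s) = count lo s.
Proof. by rewrite -sum_count_mem; apply: eq_bigr => j _; rewrite ffunE. Qed.

Lemma lowdeg_trunc d w : d <= lowdeg w -> lowdeg (trunc d w) = d.
Proof.
move=> d_le; rewrite /trunc (leq_trans d_le (lowdeg_le_size w)) lowdeg_mon_of_seq.
rewrite (fact_seq_low_high w) takel_cat ?size_low_fact_seq //.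
set L := take d _; have /eqP-> : count lo L == size L.
  by rewrite -all_count; apply/allP => x /mem_take; rewrite mem_filter => /andP[].
by rewrite size_takel // size_low_fact_seq.
Qed.

Lemma mlow_trunc d w : lowdeg w <= d -> mlow (trunc d w) = mlow w.
Proof.
move=> le_d; case: (leqP d (size (fact_seq w))) => [d_s | s_d]; last first.
  by rewrite /trunc ifN // -ltnNge.
apply/ffunP => j; rewrite !ffunE; case: ifP => // jp.
have no_j : j \notin filter (predC lo) (fact_seq w) by rewrite mem_filter /= jp.
rewrite trunc_count // -[in RHS](count_mem_fact_seq w j) (fact_seq_low_high w).
rewrite take_cat size_low_fact_seq ltnNge le_d /= !count_cat.
by rewrite (count_memPn no_j) (count_memPn (contra (@mem_take _ _ _ _) no_j)).
Qed.

Lemma trunc_lowdeg w : trunc (lowdeg w) w = mlow w.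
Proof.
apply/ffunP => j; rewrite trunc_count ?lowdeg_le_size // {1}(fact_seq_low_high w).
rewrite take_size_cat ?size_low_fact_seq // count_filter ffunE.
case: ifP => jp.
  rewrite -(count_mem_fact_seq w j); apply: eq_count => x /=.
  by case: eqP => // ->; rewrite jp.
by rewrite count_fact_seq big1 // => x /andP[/eqP-> ]; rewrite jp.
Qed.

Lemma in_pos_lowdeg w k :
  in_pos w p k -> (forall j : nat, in_pos w p j -> j <= k) -> lowdeg w = k.
Proof.
move=> [/andP[k_gt0 k_s] nth_k] k_last.
have split_s := fact_seq_low_high w; have size_L := size_low_fact_seq w.
move: k_s nth_k split_s size_L; set s := fact_seq w.
set L := filter lo s; set H := filter (predC lo) s => k_s nth_k split_s size_L.
apply/eqP; rewrite eqn_leq -size_L; apply/andP; split; rewrite leqNgt; apply/negP.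
- move=> k_lt.
  have k1_s : k < size s by rewrite split_s size_cat ltn_addr.
  have nth_k1 : nth p s k = p.
    apply/val_inj/eqP; rewrite eqn_leq.
    have : nth p s k \in L by rewrite split_s nth_cat k_lt mem_nth.
    rewrite mem_filter => /andP[-> _] /=.
    have /(pairwiseP p) ordered := pairwise_fact_seq w.
    by rewrite -{1}nth_k; apply: ordered; rewrite ?inE /= ?prednK.
  by have := k_last k.+1 (conj k1_s nth_k1); rewrite ltnn.
- move=> L_lt_k.
  have : nth p s k.-1 \in H.
    rewrite split_s nth_cat ltnNge -ltnS prednK // L_lt_k /= mem_nth //.
    rewrite ltn_subLR; last by rewrite -ltnS prednK.
    by rewrite -size_cat -split_s prednK.
  by rewrite nth_k mem_filter /= leqnn.
Qed.

End LowPart.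

Section TruncatedSocle.
Variables (n : nat) (B : mon n -> Prop) (m : mon n) (p : 'I_n) (d : nat).
Hypotheses (borelB : borel B) (Bm : B m) (m_p : 0 < m p) (lowdeg_m : lowdeg p m = d).

Local Notation mu := (mlow p (mdiv m p)).

Lemma mdiv_trunc : mdiv (trunc d m) p = mu.
Proof. by rewrite -lowdeg_m trunc_lowdeg mdiv_mlow. Qed.

Lemma trunc_mvar_mdiv (i : 'I_n) :
  i <= p -> trunc d (mmul (mvar i) (mdiv m p)) = mmul (mvar i) mu.
Proof.
move=> ip; have lowdeg_d : lowdeg p (mmul (mvar i) (mdiv m p)) = d.
  by rewrite lowdeg_mmul lowdeg_mvar // add1n lowdeg_mdiv.
by rewrite -{1}lowdeg_d trunc_lowdeg mlow_mmul mlow_mvar.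
Qed.

Lemma trunc_ideal_mvar (i : 'I_n) : i <= p -> trunc_ideal d B (mmul (mvar i) mu).
Proof.
move=> ip; exists (mmul (mvar i) mu); split; last exact: mdvd_refl.
exists (mmul (mvar i) (mdiv m p)); rewrite trunc_mvar_mdiv //.
by split=> //; apply: borel_mvar_mdiv.
Qed.

Lemma exists_mhigh_trunc_ideal u :
  B (mmul (mhigh p u) (mdiv m p)) -> exists v, trunc_ideal d B (mmul (mhigh p v) mu).
Proof.
set b := mmul _ _ => Bb; exists (trunc d b); exists (trunc d b); split; first by exists b.
apply: mdvd_mmul_mhigh; have -> : mlow p mu = mlow p b by rewrite mlow_idem mlow_mmul_mhigh.
exact: mdvd_mlow (mdvd_trunc d b).
Qed.

Lemma exists_mhigh_borel u :
  trunc_ideal d B (mmul (mhigh p u) mu) -> exists v, B (mmul (mhigh p v) (mdiv m p)).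
Proof.
move=> [_ [[b [Bb ->]] tb_div]]; exists b; apply: borelB.1 Bb _; apply: mdvd_mmul_mhigh.
have low_div : mdvd (mlow p (trunc d b)) mu.
  by have := mdvd_mlow p tb_div; rewrite mlow_mmul_mhigh mlow_idem.
have lowdeg_lt : lowdeg p (trunc d b) < d.
  rewrite -lowdeg_mlow (leq_ltn_trans (lowdeg_mdvd p low_div)) // lowdeg_mlow.
  by rewrite -lowdeg_m -(lowdeg_mdiv m_p).
case: (leqP (lowdeg p b) d) => [le_d | /ltnW /lowdeg_trunc lowdeg_eq].
  by rewrite -(mlow_trunc le_d).
by rewrite lowdeg_eq ltnn in lowdeg_lt.
Qed.

End TruncatedSocle.

Theorem lemma3p14 (n : nat) (B : mon n -> Prop) (m : mon n) (p : 'I_n) (d : nat) :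
  borel B -> in_Bgens B m -> 0 < m p ->
  in_pos m p d -> (forall j, in_pos m p j -> j <= d) ->
  (psocle B p (mdiv m p) <-> psocle (trunc_ideal d B) p (mdiv (trunc d m) p)).
Proof.
move=> borelB /in_Bgens_mem Bm m_p pos_d last_d.
have lowdeg_m := in_pos_lowdeg pos_d last_d.
have idealB : mideal B := borelB.1.
have idealT : mideal (trunc_ideal d B) := @mideal_trunc_ideal _ B d.
rewrite (mdiv_trunc lowdeg_m).
split=> [/(psocleP _ _ idealB) [_ no_high] | /(psocleP _ _ idealT) [_ no_high]].
- apply/(psocleP _ _ idealT); split; first exact: trunc_ideal_mvar.
  by move=> u /(exists_mhigh_borel borelB m_p lowdeg_m) [v /no_high].
- apply/(psocleP _ _ idealB); split; first by move=> i; apply: borel_mvar_mdiv.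
  by move=> u /(exists_mhigh_trunc_ideal d) [v /no_high].
Qed.
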